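(* Under the hypotheses and notation of the Barron estimate (with $v$ of infinite support, $a_n,h_n\in(0,1)$, $a_n\to0$, $h_n\to0$, and $\frac{1}{a_nh_n}=o(n^\tau)$ for some $\tau\in(0,1/2)$), define the oracle measure $\tilde\mu_n$ by $f_{\tilde\mu_n}(x)=f_v(x)\big[(1-a_n)\frac{\mu(A_n(x))}{v(A_n(x))}+a_n\big]$. Then $$\lim_{n\to\infty}\sup_{x\in A_v}\Big|\frac{f_{\tilde\mu_n}(x)}{f_{\mu^*_n}(x)}-1\Big|=0,\qquad\mathbb{P}_\mu\text{-a.s.}$$
   Context: $\mathbb{X}$ is a countably infinite set; for a probability $\mu$ on $\mathbb{X}$, $f_\mu(x)=\mu(\{x\})$ and $A_\mu=\{x:f_\mu(x)>0\}$. $v$ is a probability on $\mathbb{X}$ with infinite support and $\mu\ll v$. For each $n$, $\pi_n$ is a finite partition of $\mathbb{X}$ into cells each of $v$-measure $\ge h_n$, of maximal cardinality among such partitions; $A_n(x)$ is the cell of $\pi_n$ containing $x$. Given i.i.d. $X_1,X_2,\dots\sim\mu$ with law $\mathbb{P}_\mu$ and empirical measure $\hat\mu_n(A)=\frac1n\sum_{k\le n}\mathbb{1}_A(X_k)$, the Barron estimate is $f_{\mu^*_n}(x)=f_v(x)\big[(1-a_n)\frac{\hat\mu_n(A_n(x))}{v(A_n(x))}+a_n\big]$. *)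

From Stdlib Require Import Reals Lra List ClassicalEpsilon.
Open Scope R_scope.

(** A probability on a countable set T, enumerated by the bijection dec : nat -> T,
    given through its mass function f (f x = mu({x})). *)
Definition is_prob_mass {T : Type} (dec : nat -> T) (f : T -> R) : Prop :=
  (forall x, 0 <= f x) /\ infinite_sum (fun k => f (dec k)) 1.

Definition meas {T : Type} (dec : nat -> T) (f : T -> R) (A : T -> bool) : R :=
  epsilon (inhabits 0%R)
    (fun r => infinite_sum (fun k => if A (dec k) then f (dec k) else 0) r).

(** A labelling g : T -> nat with values < m describes a partition of T into the
    m cells {g = j}, j < m, each of v-measure >= h (hence nonempty). *)
Definition good_partition {T : Type} (dec : nat -> T) (fv : T -> R) (h : R)
  (m : nat) (g : T -> nat) : Prop :=
  (forall x, (g x < m)%nat) /\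
  (forall j, (j < m)%nat -> h <= meas dec fv (fun y => Nat.eqb (g y) j)).

Definition max_partition {T : Type} (dec : nat -> T) (fv : T -> R) (h : R)
  (m : nat) (g : T -> nat) : Prop :=
  good_partition dec fv h m g /\
  (forall m' g', good_partition dec fv h m' g' -> (m' <= m)%nat).

Definition cell {T : Type} (g : T -> nat) (x : T) : T -> bool :=
  fun y => Nat.eqb (g y) (g x).

Record sigma_algebra {Om : Type} (F : (Om -> Prop) -> Prop) : Prop := {
  sa_full : F (fun _ => True);
  sa_compl : forall E, F E -> F (fun w => ~ E w);
  sa_union : forall E : nat -> Om -> Prop, (forall n, F (E n)) ->
               F (fun w => exists n, E n w) }.

Record probability {Om : Type} (F : (Om -> Prop) -> Prop) (P : (Om -> Prop) -> R)
  : Prop := {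
  pr_sa : sigma_algebra F;
  pr_nonneg : forall E, F E -> 0 <= P E;
  pr_full : P (fun _ => True) = 1;
  pr_additive : forall E : nat -> Om -> Prop, (forall n, F (E n)) ->
      (forall n m w, n <> m -> E n w -> E m w -> False) ->
      infinite_sum (fun n => P (E n)) (P (fun w => exists n, E n w)) }.

(** (X_k)_k is an i.i.d. sequence of T-valued random variables with law fmu
    (T countable: joint mass function factorises on every finite set of
    distinct indices). *)
Definition iid_seq {Om T : Type} (F : (Om -> Prop) -> Prop) (P : (Om -> Prop) -> R)
  (fmu : T -> R) (X : nat -> Om -> T) : Prop :=
  (forall k x, F (fun w => X k w = x)) /\
  (forall (l : list nat) (xs : nat -> T), NoDup l ->
     P (fun w => Forall (fun k => X k w = xs k) l)
     = fold_right (fun k acc => fmu (xs k) * acc) 1 l).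

(** empirical measure of A based on the first n observations X 0, ..., X (n-1)
    (these play the role of X_1, ..., X_n) *)
Definition emp {Om T : Type} (X : nat -> Om -> T) (n : nat) (w : Om) (A : T -> bool) : R :=
  / INR n * sum_f_R0 (fun i => if A (X i w) then 1 else 0) (pred n).

Definition barron {Om T : Type} (fv : T -> R) (dec : nat -> T) (a : nat -> R)
  (lab : nat -> T -> nat) (X : nat -> Om -> T) (n : nat) (w : Om) (x : T) : R :=
  fv x * ((1 - a n) * (emp X n w (cell (lab n) x) / meas dec fv (cell (lab n) x)) + a n).

Definition oracle {T : Type} (fv fmu : T -> R) (dec : nat -> T) (a : nat -> R)
  (lab : nat -> T -> nat) (n : nat) (x : T) : R :=
  fv x * ((1 - a n) * (meas dec fmu (cell (lab n) x) / meas dec fv (cell (lab n) x)) + a n).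

From Stdlib Require Import Reals List.
From Stdlib Require Import Lra Lia Arith Permutation Classical ClassicalEpsilon FunctionalExtensionality PropExtensionality.
Open Scope R_scope.

(* The oracle and the Barron density differ only in that [mu (A_n(x))] is replaced by the
   empirical frequency of the cell, and both denominators are at least [a_n v (A_n(x)) >= a_n h_n].
   Hence the ratio is within [t] of 1 once every cell frequency is within [a_n h_n t] of its mean.
   A Chernoff bound for the Bernoulli counts and a union bound over the [K_n <= n] cells bound the
   probability of a violation at time [n] by [n exp (- c n^(1 - 2 tau))], using
   [1 / (a_n h_n) = o(n^tau)]; this is summable, and Borel-Cantelli for each [t = 1/(k+1)]
   concludes. *)

Lemma infinite_sum_le (u : nat -> R) (l M : R) :
  infinite_sum u l -> (forall n, sum_f_R0 u n <= M) -> l <= M.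
Proof.
  intros Hu HM. apply (Rle_cv_lim HM Hu).
  intros eps Heps; exists 0%nat; intros; unfold Rdist; rewrite Rminus_diag, Rabs_R0; lra.
Qed.

Lemma sum_f_R0_le_infinite_sum (u : nat -> R) (l : R) n :
  (forall k, 0 <= u k) -> infinite_sum u l -> sum_f_R0 u n <= l.
Proof.
  intros Hu Hl. apply growing_ineq; auto.
  intro m; simpl; specialize (Hu (S m)); lra.
Qed.

Lemma infinite_sum_plus (u v : nat -> R) (a b : R) :
  infinite_sum u a -> infinite_sum v b -> infinite_sum (fun k => u k + v k) (a + b).
Proof.
  intros Hu Hv eps Heps. destruct (CV_plus _ _ _ _ Hu Hv eps Heps) as [N HN].
  exists N; intros n Hn. rewrite sum_plus. apply HN; auto.
Qed.

Lemma infinite_sum_scal_r (u : nat -> R) (a c : R) :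
  infinite_sum u a -> infinite_sum (fun k => u k * c) (a * c).
Proof.
  intros Hu. assert (Hc : Un_cv (fun _ => c) c).
  { intros eps Heps; exists 0%nat; intros; unfold Rdist; rewrite Rminus_diag, Rabs_R0; lra. }
  intros eps Heps. destruct (CV_mult _ _ _ _ Hu Hc eps Heps) as [N HN].
  exists N; intros n Hn. rewrite <- scal_sum, Rmult_comm. apply HN; auto.
Qed.

Lemma infinite_sum_ext (u v : nat -> R) (a : R) :
  (forall k, u k = v k) -> infinite_sum u a -> infinite_sum v a.
Proof. intro H; replace v with u; auto; apply functional_extensionality; auto. Qed.

Lemma infinite_sum_eventually_0 (u : nat -> R) N :
  (forall k, (N < k)%nat -> u k = 0) -> infinite_sum u (sum_f_R0 u N).
Proof.
  intros H eps Heps. exists N. intros n Hn. unfold Rdist.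
  replace (sum_f_R0 u n) with (sum_f_R0 u N); [rewrite Rminus_diag, Rabs_R0; lra|].
  induction Hn; auto. simpl. rewrite H by lia. lra.
Qed.

Lemma infinite_sum_nonneg_bounded (u : nat -> R) (M : R) :
  (forall k, 0 <= u k) -> (forall n, sum_f_R0 u n <= M) -> exists l, infinite_sum u l.
Proof.
  intros Hu HM. destruct (growing_cv (sum_f_R0 u)) as [l Hl].
  - intro n; simpl; specialize (Hu (S n)); lra.
  - exists M; intros x [n ->]; auto.
  - exists l; exact Hl.
Qed.

Lemma infinite_sum_ge0 (u : nat -> R) (l : R) :
  (forall k, 0 <= u k) -> infinite_sum u l -> 0 <= l.
Proof.
  intros Hu Hl. apply Rle_trans with (sum_f_R0 u 0); [simpl; auto|].
  apply sum_f_R0_le_infinite_sum; auto.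
Qed.

Section Meas.
Context {T : Type} (dec : nat -> T) (f : T -> R) (Hf : is_prob_mass dec f).

Let restr (A : T -> bool) k := if A (dec k) then f (dec k) else 0.

Lemma meas_spec (A : T -> bool) : infinite_sum (restr A) (meas dec f A).
Proof.
  destruct Hf as [Hpos Hsum]. unfold meas.
  apply (epsilon_spec (inhabits 0) (fun r => infinite_sum (restr A) r)).
  apply (infinite_sum_nonneg_bounded _ 1).
  - intro k; unfold restr; destruct (A (dec k)); [apply Hpos|lra].
  - intro n. eapply Rle_trans;
      [|apply (sum_f_R0_le_infinite_sum _ _ n (fun k => Hpos (dec k)) Hsum)].
    apply sum_Rle; intros k _; unfold restr; destruct (A (dec k)); [lra|apply Hpos].
Qed.

Lemma meas_ge0 (A : T -> bool) : 0 <= meas dec f A.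
Proof.
  apply (infinite_sum_ge0 (restr A)); [|apply meas_spec].
  intro k; unfold restr; destruct (A (dec k)); [apply Hf|lra].
Qed.

Lemma meas_negb (A : T -> bool) : meas dec f (fun y => negb (A y)) = 1 - meas dec f A.
Proof.
  assert (H : infinite_sum (fun k => restr A k + restr (fun y => negb (A y)) k)
                (meas dec f A + meas dec f (fun y => negb (A y))))
    by (apply infinite_sum_plus; apply meas_spec).
  assert (meas dec f A + meas dec f (fun y => negb (A y)) = 1); [|lra].
  eapply uniqueness_sum; [exact H|]. eapply infinite_sum_ext; [|apply Hf].
  intro k; unfold restr; simpl. destruct (A (dec k)); simpl; lra.
Qed.

Lemma meas_le1 (A : T -> bool) : meas dec f A <= 1.
Proof. pose proof (meas_negb A); pose proof (meas_ge0 (fun y => negb (A y))); lra. Qed.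

End Meas.

Lemma meas_orb_disjoint {T : Type} (dec : nat -> T) (f : T -> R) (A B : T -> bool) :
  is_prob_mass dec f -> (forall y, andb (A y) (B y) = false) ->
  meas dec f (fun y => orb (A y) (B y)) = meas dec f A + meas dec f B.
Proof.
  intros Hf Hd. eapply uniqueness_sum; [apply (meas_spec dec f Hf)|].
  eapply infinite_sum_ext; [|apply infinite_sum_plus; apply (meas_spec dec f Hf)].
  intro k; simpl. specialize (Hd (dec k)).
  destruct (A (dec k)), (B (dec k)); simpl in *; try discriminate; lra.
Qed.

Lemma good_partition_size {T : Type} (dec : nat -> T) (fv : T -> R) h K lab :
  is_prob_mass dec fv -> good_partition dec fv h K lab -> INR K * h <= 1.
Proof.
  intros Hv [_ Hcell].
  assert (H : forall K', (K' <= K)%nat -> INR K' * h <= meas dec fv (fun y => Nat.ltb (lab y) K')).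
  { induction K' as [|K' IH]; intro HK.
    - replace (INR 0 * h) with 0 by (simpl; ring). apply meas_ge0; auto.
    - replace (fun y => Nat.ltb (lab y) (S K'))
        with (fun y => orb (Nat.ltb (lab y) K') (Nat.eqb (lab y) K')).
      + rewrite meas_orb_disjoint; auto.
        * rewrite S_INR. specialize (Hcell K' ltac:(lia)). specialize (IH ltac:(lia)). lra.
        * intro y. destruct (Nat.ltb_spec (lab y) K'), (Nat.eqb_spec (lab y) K'); auto; lia.
      + apply functional_extensionality; intro y.
        destruct (Nat.ltb_spec (lab y) K'), (Nat.eqb_spec (lab y) K'), (Nat.ltb_spec (lab y) (S K'));
          auto; lia. }
  eapply Rle_trans; [apply H; auto|apply meas_le1; auto].
Qed.

(** * Chernoff bound for Bernoulli sequences *)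

Definition bern_weight (p : R) (b : list bool) : R :=
  fold_right (fun (x : bool) acc => (if x then p else 1 - p) * acc) 1 b.

Definition ntrue (b : list bool) : R :=
  fold_right (fun (x : bool) acc => (if x then 1 else 0) + acc) 0 b.

Fixpoint bool_seqs (n : nat) : list (list bool) :=
  match n with
  | 0%nat => nil :: nil
  | S n => map (cons true) (bool_seqs n) ++ map (cons false) (bool_seqs n)
  end.

Definition sum_over (g : list bool -> R) (L : list (list bool)) : R :=
  fold_right (fun b acc => g b + acc) 0 L.

Lemma in_bool_seqs n b : In b (bool_seqs n) <-> length b = n.
Proof.
  revert b; induction n; intro b; simpl.
  - split; [intros [<-|[]]; auto|destruct b; simpl; try lia; auto].
  - rewrite in_app_iff, !in_map_iff. split.
    + intros [[b' [<- H]]|[b' [<- H]]]; simpl; f_equal; apply IHn; auto.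
    + destruct b as [|x b]; simpl; [lia|]. intro H. injection H; intro H'.
      destruct x; [left|right]; exists b; split; auto; apply IHn; auto.
Qed.

Lemma NoDup_bool_seqs n : NoDup (bool_seqs n).
Proof.
  induction n; simpl; [repeat constructor; intros []|].
  apply NoDup_app; try (apply FinFun.Injective_map_NoDup; auto; intros x y H; injection H; auto).
  intros b H1 H2. apply in_map_iff in H1, H2.
  destruct H1 as [? [<- _]], H2 as [? [H _]]. discriminate.
Qed.

Lemma sum_over_app g L1 L2 : sum_over g (L1 ++ L2) = sum_over g L1 + sum_over g L2.
Proof. induction L1; unfold sum_over in *; simpl; [ring|]. rewrite IHL1; ring. Qed.

Lemma sum_over_ext g1 g2 L : (forall b, g1 b = g2 b) -> sum_over g1 L = sum_over g2 L.
Proof. intro H; induction L; unfold sum_over in *; simpl; auto. rewrite IHL, H; auto. Qed.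

Lemma sum_over_plus g1 g2 L :
  sum_over (fun b => g1 b + g2 b) L = sum_over g1 L + sum_over g2 L.
Proof. induction L; unfold sum_over in *; simpl; [ring|]. rewrite IHL; ring. Qed.

Lemma sum_over_scal c g L : sum_over (fun b => c * g b) L = c * sum_over g L.
Proof. induction L; unfold sum_over in *; simpl; [ring|]. rewrite IHL; ring. Qed.

Lemma sum_over_map_cons g x L : sum_over g (map (cons x) L) = sum_over (fun b => g (x :: b)) L.
Proof. induction L; unfold sum_over in *; simpl; auto. rewrite IHL; auto. Qed.

Lemma sum_over_filter_le (f : list bool -> bool) h g L :
  (forall b, 0 <= h b) -> (forall b, 0 <= g b) -> (forall b, f b = true -> 1 <= g b) ->
  sum_over h (filter f L) <= sum_over (fun b => h b * g b) L.
Proof.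
  intros Hh Hg Hf. induction L as [|b L IH]; unfold sum_over in *; simpl; [lra|].
  pose proof (Hh b); pose proof (Hg b). destruct (f b) eqn:E; simpl.
  - specialize (Hf b E). nra.
  - nra.
Qed.

Lemma bern_weight_ge0 p b : 0 <= p <= 1 -> 0 <= bern_weight p b.
Proof. intro Hp; induction b as [|[] b]; simpl; nra. Qed.

Lemma ntrue_ge0 b : 0 <= ntrue b.
Proof. induction b as [|[] b]; unfold ntrue in *; simpl; lra. Qed.

Lemma ntrue_app b1 b2 : ntrue (b1 ++ b2) = ntrue b1 + ntrue b2.
Proof. induction b1; unfold ntrue in *; simpl; [ring|]. rewrite IHb1; ring. Qed.

Lemma bern_mgf p mu n :
  sum_over (fun b => bern_weight p b * exp (mu * ntrue b)) (bool_seqs n)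
  = (p * exp mu + (1 - p)) ^ n.
Proof.
  induction n; simpl.
  - unfold sum_over, bern_weight, ntrue; simpl. rewrite Rmult_0_r, exp_0; ring.
  - rewrite sum_over_app, !sum_over_map_cons.
    rewrite (sum_over_ext _ (fun b => p * exp mu * (bern_weight p b * exp (mu * ntrue b)))),
      (sum_over_ext (fun b => _ (false :: b) * _) (fun b => (1 - p) * (bern_weight p b * exp (mu * ntrue b)))).
    + rewrite !sum_over_scal, IHn; ring.
    + intro b; unfold bern_weight, ntrue; simpl. rewrite Rplus_0_l; ring.
    + intro b; unfold bern_weight, ntrue; simpl.
      rewrite Rmult_plus_distr_l, exp_plus, Rmult_1_r; ring.
Qed.

Lemma exp_le_quadratic mu : -1/2 <= mu <= 1/2 -> exp mu <= 1 + mu + 2 * mu ^ 2.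
Proof.
  intro Hm. pose proof (exp_ineq1_le (- mu)). pose proof (exp_pos mu).
  assert (exp mu * exp (- mu) = 1) by (rewrite <- exp_plus, Rplus_opp_r, exp_0; auto).
  assert (exp mu * (1 - mu) <= 1) by nra.
  assert (1 <= (1 + mu + 2 * mu ^ 2) * (1 - mu)) by nra.
  nra.
Qed.

Lemma bern_mgf_factor_le p mu : 0 <= p <= 1 -> -1/2 <= mu <= 1/2 ->
  p * exp mu + (1 - p) <= exp (p * mu + 2 * mu ^ 2).
Proof.
  intros Hp Hm. pose proof (exp_le_quadratic mu Hm).
  pose proof (exp_ineq1_le (p * mu + 2 * mu ^ 2)). nra.
Qed.

Lemma exp_pow x n : exp x ^ n = exp (INR n * x).
Proof.
  induction n; simpl; [rewrite Rmult_0_l, exp_0; auto|].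
  rewrite IHn, <- exp_plus. f_equal. destruct n; simpl; ring.
Qed.

(* Markov's inequality for the two exponential tilts [exp (+- delta/4 * ntrue b)]. *)
Definition chernoff_weight (p delta : R) (n : nat) (b : list bool) : R :=
  exp (delta / 4 * (ntrue b - INR n * p - INR n * delta))
  + exp (- (delta / 4) * (ntrue b - INR n * p + INR n * delta)).

Lemma chernoff_weight_ge0 p delta n b : 0 <= chernoff_weight p delta n b.
Proof.
  unfold chernoff_weight.
  pose proof (exp_pos (delta / 4 * (ntrue b - INR n * p - INR n * delta))).
  pose proof (exp_pos (- (delta / 4) * (ntrue b - INR n * p + INR n * delta))). lra.
Qed.

Lemma chernoff_weight_ge1 p delta n b : 0 < delta ->
  INR n * delta <= Rabs (ntrue b - INR n * p) -> 1 <= chernoff_weight p delta n b.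
Proof.
  intros Hd Hb. unfold chernoff_weight. set (c := ntrue b - INR n * p) in *.
  pose proof (exp_pos (delta / 4 * (c - INR n * delta))).
  pose proof (exp_pos (- (delta / 4) * (c + INR n * delta))).
  pose proof (exp_ineq1_le (delta / 4 * (c - INR n * delta))).
  pose proof (exp_ineq1_le (- (delta / 4) * (c + INR n * delta))).
  destruct (Rle_dec 0 c).
  - rewrite Rabs_right in Hb by lra.
    assert (0 <= delta / 4 * (c - INR n * delta)) by (apply Rmult_le_pos; lra). lra.
  - rewrite Rabs_left in Hb by lra.
    assert (0 <= - (delta / 4) * (c + INR n * delta)) by nra. lra.
Qed.

Lemma chernoff_weight_mean p delta n : 0 <= p <= 1 -> 0 < delta <= 1 ->
  sum_over (fun b => bern_weight p b * chernoff_weight p delta n b) (bool_seqs n)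
  <= 2 * exp (- (INR n * delta ^ 2 / 8)).
Proof.
  intros Hp Hd. set (l := delta / 4). unfold chernoff_weight; fold l.
  rewrite (sum_over_ext _ (fun b =>
      exp (- l * (INR n * p + INR n * delta)) * (bern_weight p b * exp (l * ntrue b))
      + exp (l * (INR n * p - INR n * delta)) * (bern_weight p b * exp (- l * ntrue b)))).
  2:{ intro b.
      replace (l * (ntrue b - INR n * p - INR n * delta))
        with (- l * (INR n * p + INR n * delta) + l * ntrue b) by ring.
      replace (- l * (ntrue b - INR n * p + INR n * delta))
        with (l * (INR n * p - INR n * delta) + - l * ntrue b) by ring.
      rewrite !exp_plus; ring. }
  rewrite sum_over_plus, !sum_over_scal, !bern_mgf.
  assert (H1 : (p * exp l + (1 - p)) ^ n <= exp (p * l + 2 * l ^ 2) ^ n).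
  { apply pow_incr. split; [pose proof (exp_pos l); nra|apply bern_mgf_factor_le; unfold l; lra]. }
  assert (H2 : (p * exp (- l) + (1 - p)) ^ n <= exp (p * (- l) + 2 * (- l) ^ 2) ^ n).
  { apply pow_incr. split; [pose proof (exp_pos (- l)); nra|apply bern_mgf_factor_le; unfold l; lra]. }
  rewrite exp_pow in H1, H2.
  apply (Rmult_le_compat_l (exp (- l * (INR n * p + INR n * delta)))) in H1; [|left; apply exp_pos].
  apply (Rmult_le_compat_l (exp (l * (INR n * p - INR n * delta)))) in H2; [|left; apply exp_pos].
  rewrite <- exp_plus in H1, H2.
  replace (- l * (INR n * p + INR n * delta) + INR n * (p * l + 2 * l ^ 2))
    with (- (INR n * delta ^ 2 / 8)) in H1 by (unfold l; field).
  replace (l * (INR n * p - INR n * delta) + INR n * (p * - l + 2 * (- l) ^ 2))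
    with (- (INR n * delta ^ 2 / 8)) in H2 by (unfold l; field).
  lra.
Qed.

Lemma INR_ge1 n : (1 <= n)%nat -> 1 <= INR n.
Proof. intro; replace 1 with (INR 1) by auto; apply le_INR; auto. Qed.

Lemma exp_le x y : x <= y -> exp x <= exp y.
Proof. intro H; destruct (Rle_lt_or_eq_dec _ _ H); [left; apply exp_increasing|subst]; lra. Qed.

Lemma sum_telescoping_inv C N M : (1 <= N)%nat ->
  sum_f_R0 (fun i => C / (INR (N + i) * INR (S (N + i)))) M = C / INR N - C / INR (S (N + M)).
Proof.
  intro HN. pose proof (INR_ge1 N HN).
  induction M; cbn [sum_f_R0].
  - rewrite Nat.add_0_r, (S_INR N). field; lra.
  - rewrite IHM. replace (N + S M)%nat with (S (N + M)) by lia. rewrite !S_INR.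
    pose proof (pos_INR (N + M)). field; lra.
Qed.

Lemma pow_div_le_exp y m : 0 <= y -> (0 < m)%nat -> (y / INR m) ^ m <= exp y.
Proof.
  intros Hy Hm. assert (0 < INR m) by (apply lt_0_INR; auto).
  replace (exp y) with (exp (y / INR m) ^ m) by (rewrite exp_pow; f_equal; field; lra).
  apply pow_incr. split; [apply Rmult_le_pos; [|left; apply Rinv_0_lt_compat]; lra|].
  pose proof (exp_ineq1_le (y / INR m)). lra.
Qed.

(* Take [m] with [m beta >= 3] in [exp y >= (y/m)^m]. *)
Lemma exp_neg_stretched_le_cube (beta c : R) : 0 < beta -> 0 < c ->
  exists D, 0 < D /\ forall x, 1 <= x -> exp (- (c * Rpower x beta)) <= D / x ^ 3.
Proof.
  intros Hb Hc. destruct (INR_unbounded (3 / beta)) as [m0 Hm0].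
  set (m := S m0).
  assert (Hm : 3 <= beta * INR m).
  { unfold m. rewrite S_INR. assert (3 / beta * beta = 3) by (field; lra). nra. }
  assert (Hmpos : 0 < INR m) by (apply lt_0_INR; unfold m; lia).
  set (D := (INR m / c) ^ m).
  assert (HD : 0 < D) by (apply pow_lt, Rdiv_lt_0_compat; lra).
  exists D. split; auto. intros x Hx.
  set (y := c * Rpower x beta).
  assert (Hxb : 0 < Rpower x beta) by (unfold Rpower; apply exp_pos).
  assert (Hpow : x ^ 3 <= Rpower x beta ^ m).
  { rewrite <- (Rpower_pow m (Rpower x beta)), Rpower_mult, <- (Rpower_pow 3 x) by lra.
    apply Rle_Rpower; auto. replace (INR 3) with 3 by (simpl; ring). lra. }
  assert (Hym : (y / INR m) ^ m = Rpower x beta ^ m / D).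
  { unfold D, Rdiv. rewrite <- pow_inv, <- Rpow_mult_distr.
    f_equal. unfold y. field; lra. }
  assert (Hx3 : x ^ 3 / D <= exp y).
  { eapply Rle_trans; [|apply (pow_div_le_exp y m); [unfold y; nra|unfold m; lia]].
    rewrite Hym. apply Rmult_le_compat_r; [left; apply Rinv_0_lt_compat|]; auto. }
  assert (Hx3pos : 0 < x ^ 3) by (apply pow_lt; lra).
  rewrite exp_Ropp. replace (D / x ^ 3) with (/ (x ^ 3 / D)) by (field; lra).
  apply Rinv_le_contravar; auto. apply Rdiv_lt_0_compat; auto.
Qed.

Lemma stretched_exp_decay (beta c : R) : 0 < beta -> 0 < c ->
  exists C, 0 <= C /\ forall n, (1 <= n)%nat ->
    2 * INR n * exp (- (c * Rpower (INR n) beta)) <= C / (INR n * INR (S n)).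
Proof.
  intros Hb Hc. destruct (exp_neg_stretched_le_cube beta c Hb Hc) as [D [HD HDx]].
  exists (4 * D). split; [lra|]. intros n Hn.
  assert (Hx : 1 <= INR n) by (apply INR_ge1; auto).
  assert (Hx3 : 0 < INR n ^ 3) by (apply pow_lt; lra).
  rewrite S_INR.
  apply Rle_trans with (2 * INR n * (D / INR n ^ 3)); [apply Rmult_le_compat_l; auto; lra|].
  apply (Rmult_le_reg_r (INR n ^ 3)); auto.
  replace (2 * INR n * (D / INR n ^ 3) * INR n ^ 3) with (2 * INR n * D) by (field; lra).
  replace (4 * D / (INR n * (INR n + 1)) * INR n ^ 3)
    with (4 * D * INR n * (INR n / (INR n + 1))) by (field; lra).
  assert (1/2 <= INR n / (INR n + 1)).
  { apply (Rmult_le_reg_r (INR n + 1)); [lra|].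
    replace (INR n / (INR n + 1) * (INR n + 1)) with (INR n) by (field; lra). lra. }
  apply Rle_trans with (4 * D * INR n * (1/2)); [lra|].
  apply Rmult_le_compat_l; [nra|auto].
Qed.

Lemma deviation_exponent_ge n s tau k : (1 <= n)%nat -> 0 < s ->
  1 < Rpower (INR n) tau * s ->
  Rpower (INR n) (1 - 2 * tau) / (8 * INR (S k) ^ 2) <= INR n * (s / INR (S k)) ^ 2 / 8.
Proof.
  intros Hn Hs Hrs. pose proof (INR_ge1 n Hn).
  set (r := Rpower (INR n) tau) in *.
  assert (Hr : 0 < r) by (unfold r, Rpower; apply exp_pos).
  assert (Hk : 0 < INR (S k)) by (apply lt_0_INR; lia).
  assert (Hb : Rpower (INR n) (1 - 2 * tau) = INR n / (r * r)).
  { unfold Rminus. rewrite Rpower_plus, Rpower_1, Rpower_Ropp by lra.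
    unfold r. rewrite <- Rpower_plus. replace (tau + tau) with (2 * tau) by ring. reflexivity. }
  rewrite Hb.
  replace (INR n * (s / INR (S k)) ^ 2 / 8)
    with (INR n / (r * r) / (8 * INR (S k) ^ 2) * (r * s) ^ 2) by (field; lra).
  assert (0 < INR n / (r * r) / (8 * INR (S k) ^ 2)).
  { apply Rdiv_lt_0_compat; [apply Rdiv_lt_0_compat; nra|]. apply Rmult_lt_0_compat; [lra|apply pow_lt; lra]. }
  assert (1 <= (r * s) ^ 2) by nra. nra.
Qed.

(* The numerators differ by [(1-a)(p-e)/v], the denominator is [>= a], and [v >= h]. *)
Lemma barron_ratio_le fv a v h e p t :
  0 < fv -> 0 < a < 1 -> 0 < h -> h <= v -> 0 <= e -> 0 < t -> Rabs (p - e) <= a * h * t ->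
  Rabs (fv * ((1 - a) * (p / v) + a) / (fv * ((1 - a) * (e / v) + a)) - 1) <= t.
Proof.
  intros Hf Ha Hh Hv He Ht Hpe.
  set (q := (1 - a) * (e / v) + a).
  assert (Hev : 0 <= e / v) by (apply Rmult_le_pos; [lra|left; apply Rinv_0_lt_compat; lra]).
  assert (Hq : a <= q) by (unfold q; nra).
  assert (Hp : (1 - a) * (p / v) + a = q + (1 - a) * (p - e) / v) by (unfold q; field; lra).
  rewrite Hp.
  replace (fv * (q + (1 - a) * (p - e) / v) / (fv * q) - 1) with ((1 - a) / (v * q) * (p - e))
    by (field; repeat split; lra).
  rewrite Rabs_mult, Rabs_right
    by (apply Rle_ge, Rmult_le_pos; [lra|left; apply Rinv_0_lt_compat; nra]).
  assert (Hc : (1 - a) / (v * q) <= / (a * h)).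
  { apply (Rmult_le_reg_r (v * q * (a * h))); [apply Rmult_lt_0_compat; nra|].
    replace ((1 - a) / (v * q) * (v * q * (a * h))) with ((1 - a) * (a * h)) by (field; nra).
    replace (/ (a * h) * (v * q * (a * h))) with (v * q) by (field; nra).
    assert (a * h <= v * q) by nra. nra. }
  apply Rle_trans with (/ (a * h) * (a * h * t)).
  - apply Rmult_le_compat; auto; [|apply Rabs_pos].
    apply Rmult_le_pos; [lra|left; apply Rinv_0_lt_compat; nra].
  - right. field. nra.
Qed.

(* With [r = n^tau], the rate hypothesis gives [r a h > 1], and a partition into [K] cells of
   mass [>= h] has [K h <= 1]; together these force [K < r <= n]. *)
Lemma rate_bounds (a h : R) K n tau : 0 < a < 1 -> 0 < h < 1 -> 0 < tau < 1 -> (1 <= n)%nat ->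
  INR K * h <= 1 -> Rabs (/ (a * h) / Rpower (INR n) tau - 0) < 1 ->
  INR K <= INR n /\ 1 < Rpower (INR n) tau * (a * h).
Proof.
  intros Ha Hh Htau Hn HK Hrate. pose proof (INR_ge1 n Hn).
  set (r := Rpower (INR n) tau) in *.
  assert (Hr : 0 < r) by (unfold r, Rpower; apply exp_pos).
  assert (Hs : 0 < a * h) by nra.
  assert (Hrs : 1 < r * (a * h)).
  { rewrite Rminus_0_r in Hrate. apply Rabs_def2 in Hrate.
    apply proj1, (Rmult_lt_compat_r (r * (a * h))) in Hrate; [|nra].
    replace (/ (a * h) / r * (r * (a * h))) with 1 in Hrate by (field; lra). lra. }
  assert (Hrn : r <= INR n).
  { unfold r. rewrite <- (Rpower_1 (INR n)) at 2 by lra. apply Rle_Rpower; lra. }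
  split; auto. assert (INR K * h < r * h) by nra.
  assert (INR K < r) by (apply (Rmult_lt_reg_r h); lra). lra.
Qed.

(** * Probability spaces and Borel-Cantelli *)

Lemma pred_ext {Om : Type} (E E' : Om -> Prop) : (forall w, E w <-> E' w) -> E = E'.
Proof.
  intro H; apply functional_extensionality; intro w; apply propositional_extensionality; auto.
Qed.

Lemma P_ext {Om : Type} (P : (Om -> Prop) -> R) (E E' : Om -> Prop) :
  (forall w, E w <-> E' w) -> P E = P E'.
Proof. intro H; rewrite (pred_ext _ _ H); auto. Qed.

Lemma F_ext {Om : Type} (F : (Om -> Prop) -> Prop) (E E' : Om -> Prop) :
  F E -> (forall w, E w <-> E' w) -> F E'.
Proof. intros HE H; rewrite <- (pred_ext _ _ H); auto. Qed.

Definition limsup_event {Om : Type} (B : nat -> Om -> Prop) : Om -> Prop :=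
  fun w => forall N, exists n, (N <= n)%nat /\ B n w.

Section ProbabilitySpace.
Context {Om : Type} {F : (Om -> Prop) -> Prop} {P : (Om -> Prop) -> R}.
Hypothesis HP : probability F P.

Lemma F_true : F (fun _ => True).
Proof. apply (sa_full _ (pr_sa _ _ HP)). Qed.

Lemma F_not E : F E -> F (fun w => ~ E w).
Proof. apply (sa_compl _ (pr_sa _ _ HP)). Qed.

Lemma F_exists (E : nat -> Om -> Prop) : (forall n, F (E n)) -> F (fun w => exists n, E n w).
Proof. apply (sa_union _ (pr_sa _ _ HP)). Qed.

Lemma F_false : F (fun _ => False).
Proof. apply (F_ext _ _ _ (F_not _ F_true)). tauto. Qed.

Lemma F_const (Q : Prop) : F (fun _ => Q).
Proof.
  destruct (classic Q); [apply (F_ext _ _ _ F_true)|apply (F_ext _ _ _ F_false)]; tauto.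
Qed.

Lemma F_or A B : F A -> F B -> F (fun w => A w \/ B w).
Proof.
  intros HA HB.
  apply (F_ext _ _ _ (F_exists (fun n => match n with 0%nat => A | _ => B end) ltac:(intros [|]; auto))).
  intro w; split; [intros [[|n] H]; auto|intros [H|H]; [exists 0%nat|exists 1%nat]; auto].
Qed.

Lemma F_and A B : F A -> F B -> F (fun w => A w /\ B w).
Proof.
  intros HA HB. apply (F_ext _ _ _ (F_not _ (F_or _ _ (F_not _ HA) (F_not _ HB)))).
  intro w; tauto.
Qed.

Lemma F_forall (E : nat -> Om -> Prop) : (forall n, F (E n)) -> F (fun w => forall n, E n w).
Proof.
  intro HE. apply (F_ext _ _ _ (F_not _ (F_exists (fun n w => ~ E n w) (fun n => F_not _ (HE n))))).
  intro w; split; [intros H n; apply NNPP; intro; apply H; eauto|intros H [n Hn]; auto].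
Qed.

Lemma F_exists_lt (E : nat -> Om -> Prop) n :
  (forall k, F (E k)) -> F (fun w => exists k, (k < n)%nat /\ E k w).
Proof.
  intro HE. apply (F_exists (fun k w => (k < n)%nat /\ E k w)). intro k. apply F_and; auto. apply F_const.
Qed.

Lemma F_limsup (B : nat -> Om -> Prop) : (forall n, F (B n)) -> F (limsup_event B).
Proof.
  intro HB. apply F_forall; intro N. apply (F_exists (fun n w => (N <= n)%nat /\ B n w)).
  intro n; apply F_and; auto; apply F_const.
Qed.

Lemma P_ge0 E : F E -> 0 <= P E.
Proof. apply (pr_nonneg _ _ HP). Qed.

(* Countable additivity for copies of the empty event: [(n+1) P(empty)] must converge. *)
Lemma P_false : P (fun _ => False) = 0.
Proof.
  set (c := P (fun _ => False)).
  assert (H : Un_cv (fun n => c * INR (S n)) c).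
  { pose proof (pr_additive _ _ HP (fun _ _ => False) (fun _ => F_false) (fun _ _ _ _ x _ => x)) as H.
    rewrite (P_ext P _ (fun _ => False)) in H by (intro; split; [intros [_ []]|tauto]).
    intros eps Heps; destruct (H eps Heps) as [N HN]; exists N; intros n Hn.
    rewrite <- sum_cte; apply HN; auto. }
  assert (Hc : Un_cv (fun n => c * INR (S (n + 1)) - c * INR (S n)) 0).
  { replace 0 with (c - c) by ring. apply CV_minus; [apply (CV_shift' _ 1 c H)|exact H]. }
  symmetry; apply (UL_sequence _ _ _ Hc).
  intros eps Heps; exists 0%nat; intros n _. unfold Rdist.
  replace (c * INR (S (n + 1)) - c * INR (S n) - c) with 0
    by (rewrite Nat.add_1_r, (S_INR (S n)); ring).
  rewrite Rabs_R0; lra.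
Qed.

Lemma P_or_disjoint A B : F A -> F B -> (forall w, A w -> B w -> False) ->
  P (fun w => A w \/ B w) = P A + P B.
Proof.
  intros HA HB Hd.
  set (E := fun n : nat => match n with 0%nat => A | 1%nat => B | _ => fun _ => False end).
  assert (HE : forall n, F (E n)) by (intros [|[|n]]; simpl; auto; apply F_false).
  assert (HEd : forall n m w, n <> m -> E n w -> E m w -> False)
    by (intros [|[|n]] [|[|m]] w Hnm; simpl; try tauto; try lia; eauto).
  pose proof (pr_additive _ _ HP E HE HEd) as H.
  rewrite (P_ext P _ (fun w => A w \/ B w)) in H.
  - eapply uniqueness_sum; [exact H|].
    replace (P A + P B) with (sum_f_R0 (fun n => P (E n)) 1) by reflexivity.
    apply infinite_sum_eventually_0. intros [|[|k]] Hk; try lia. apply P_false.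
  - intro w; split; [intros [[|[|n]] Hn]; simpl in Hn; tauto|].
    intros [H1|H1]; [exists 0%nat|exists 1%nat]; auto.
Qed.

Lemma P_mono A B : F A -> F B -> (forall w, A w -> B w) -> P A <= P B.
Proof.
  intros HA HB Hs. assert (HD : F (fun w => B w /\ ~ A w)) by (apply F_and; auto; apply F_not; auto).
  rewrite (P_ext P B (fun w => A w \/ (B w /\ ~ A w)))
    by (intro w; destruct (classic (A w)); split; intuition).
  rewrite P_or_disjoint by (auto; tauto). pose proof (P_ge0 _ HD); lra.
Qed.

Lemma P_not A : F A -> P (fun w => ~ A w) = 1 - P A.
Proof.
  intro HA. rewrite <- (pr_full _ _ HP).
  rewrite (P_ext P (fun _ => True) (fun w => A w \/ ~ A w)) by (intro w; split; auto; intros; apply classic).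
  rewrite P_or_disjoint by (auto; try apply F_not; auto; tauto). ring.
Qed.

Lemma P_or_le A B : F A -> F B -> P (fun w => A w \/ B w) <= P A + P B.
Proof.
  intros HA HB. assert (HD : F (fun w => B w /\ ~ A w)) by (apply F_and; auto; apply F_not; auto).
  rewrite (P_ext P _ (fun w => A w \/ (B w /\ ~ A w)))
    by (intro w; destruct (classic (A w)); split; intuition).
  rewrite P_or_disjoint by (auto; tauto).
  pose proof (P_mono _ _ HD HB (fun w H => proj1 H)). lra.
Qed.

Lemma P_exists_le_sum (E : nat -> Om -> Prop) n : (forall k, F (E k)) ->
  P (fun w => exists k, (k <= n)%nat /\ E k w) <= sum_f_R0 (fun k => P (E k)) n.
Proof.
  intro HE. induction n as [|n IH].
  - simpl; right. apply P_ext. intro w; split; [intros [k [Hk Hw]]; replace k with 0%nat in Hw by lia; auto|].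
    intro; exists 0%nat; auto.
  - rewrite (P_ext P _ (fun w => (exists k, (k < S n)%nat /\ E k w) \/ E (S n) w)).
    + eapply Rle_trans; [apply P_or_le; auto; apply F_exists_lt; auto|]. simpl.
      rewrite (P_ext P _ (fun w => exists k, (k <= n)%nat /\ E k w))
        by (intro; split; intros [k Hk]; exists k; split; try tauto; lia).
      lra.
    + intro w; split.
      * intros [k [Hk Hw]]. destruct (Nat.eq_dec k (S n)); [subst; auto|left; exists k; split; auto; lia].
      * intros [[k [Hk Hw]]|Hw]; [exists k; split; auto; lia|exists (S n); auto].
Qed.

Lemma P_exists_le (E : nat -> Om -> Prop) (M : R) : (forall k, F (E k)) ->
  (forall n, sum_f_R0 (fun k => P (E k)) n <= M) -> P (fun w => exists k, E k w) <= M.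
Proof.
  intros HE HM.
  set (D := fun n w => E n w /\ ~ (exists k, (k < n)%nat /\ E k w)).
  assert (HD : forall n, F (D n)) by (intro n; apply F_and; auto; apply F_not, F_exists_lt; auto).
  assert (HDd : forall n m w, n <> m -> D n w -> D m w -> False).
  { intros n m w Hnm [H1 H2] [H3 H4].
    destruct (Nat.lt_ge_cases n m); [apply H4|apply H2; exists m; split]; eauto; lia. }
  pose proof (pr_additive _ _ HP D HD HDd) as H.
  rewrite (P_ext P _ (fun w => exists k, E k w)) in H.
  - apply (infinite_sum_le _ _ _ H). intro n. eapply Rle_trans; [|apply (HM n)].
    apply sum_Rle; intros k _. apply P_mono; auto. intros w [Hw _]; auto.
  - intro w; split; [intros [n [Hn _]]; eauto|intros [n Hn]].
    induction n as [n IH] using (well_founded_induction lt_wf).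
    destruct (classic (exists k, (k < n)%nat /\ E k w)) as [[k [Hk Ek]]|Hno].
    + exact (IH k Hk Ek).
    + exists n; split; auto.
Qed.

(* The tails [P (exists n >= N, B n)] are bounded by the telescoping sum [C / N]. *)
Lemma borel_cantelli (B : nat -> Om -> Prop) (C : R) N0 :
  (forall n, F (B n)) -> (1 <= N0)%nat ->
  (forall n, (N0 <= n)%nat -> P (B n) <= C / (INR n * INR (S n))) ->
  P (limsup_event B) = 0.
Proof.
  intros HB HN0 Hb.
  assert (HC : 0 <= C).
  { pose proof (Rle_trans _ _ _ (P_ge0 _ (HB N0)) (Hb N0 (le_n _))) as H.
    assert (0 < INR N0 * INR (S N0)) by (apply Rmult_lt_0_compat; apply lt_0_INR; lia).
    apply (Rmult_le_reg_r (/ (INR N0 * INR (S N0)))); [apply Rinv_0_lt_compat; auto|].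
    rewrite Rmult_0_l; exact H. }
  assert (Htail : forall N, (N0 <= N)%nat -> P (limsup_event B) <= C / INR N).
  { intros N HN. apply Rle_trans with (P (fun w => exists i, B (N + i)%nat w)).
    - apply P_mono; [apply F_limsup; auto|apply F_exists; auto|].
      intros w Hw. destruct (Hw N) as [n [Hn Hbn]]. exists (n - N)%nat.
      replace (N + (n - N))%nat with n by lia; auto.
    - apply P_exists_le; auto. intro M.
      eapply Rle_trans; [apply (sum_Rle _ (fun i => C / (INR (N + i) * INR (S (N + i)))))|].
      + intros i _. apply Hb. lia.
      + rewrite sum_telescoping_inv by lia.
        assert (0 <= C / INR (S (N + M))).
        { apply Rmult_le_pos; auto. left; apply Rinv_0_lt_compat, lt_0_INR; lia. }
        lra. }
  set (q := P (limsup_event B)) in *.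
  assert (Hq0 : 0 <= q) by (apply P_ge0, F_limsup; auto).
  destruct (Rle_lt_or_eq_dec _ _ Hq0) as [Hq|]; auto.
  destruct (INR_unbounded (C / q)) as [N1 HN1].
  set (N := max N1 N0).
  assert (HqN := Htail N ltac:(unfold N; lia)).
  assert (INR N1 <= INR N) by (apply le_INR; unfold N; lia).
  assert (HN : 0 < INR N) by (apply lt_0_INR; unfold N; lia).
  assert (C / q * q = C) by (field; lra).
  assert (C / INR N * INR N = C) by (field; lra).
  assert (q * INR N <= C) by (apply (Rmult_le_compat_r (INR N)) in HqN; lra).
  nra.
Qed.

Lemma almost_surely_eventually_not (B : nat -> nat -> Om -> Prop) :
  (forall k n, F (B k n)) -> (forall k, P (limsup_event (B k)) = 0) ->
  exists E, F E /\ P E = 1 /\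
    forall w, E w -> forall k, exists N, forall n, (N <= n)%nat -> ~ B k n w.
Proof.
  intros HB Hnull. set (Bad := fun w => exists k, limsup_event (B k) w).
  assert (HBad : F Bad) by (apply F_exists; intro k; apply F_limsup; auto).
  exists (fun w => ~ Bad w). split; [apply F_not; auto|split].
  - rewrite P_not by auto.
    assert (P Bad <= 0); [|pose proof (P_ge0 _ HBad); lra].
    apply P_exists_le; [intro k; apply F_limsup; auto|].
    intro m. rewrite (sum_eq _ (fun _ => 0)) by (intros; apply Hnull). rewrite sum_cte; lra.
  - intros w Hw k. assert (Hk : ~ limsup_event (B k) w) by (intro; apply Hw; exists k; auto).
    apply not_all_ex_not in Hk as [N HN]. exists N. intros n Hn HBn. apply HN. eauto.
Qed.
End ProbabilitySpace.

(** * Empirical frequencies of an i.i.d. sequence *)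

Definition depends_on_first {T : Type} (m : nat) (Q : (nat -> T) -> Prop) : Prop :=
  forall f g : nat -> T, (forall i, (i < m)%nat -> f i = g i) -> Q f -> Q g.

Lemma depends_on_first_Forall {T : Type} (l : list nat) (G : nat -> T -> Prop) :
  exists m, depends_on_first m (fun f => Forall (fun k => G k (f k)) l).
Proof.
  assert (Hm : exists m, forall k, In k l -> (k < m)%nat).
  { induction l as [|k l [m Hm]]; [exists 0%nat; intros ? []|].
    exists (S (max k m)). intros i [<-|Hi]; [lia|specialize (Hm i Hi); lia]. }
  destruct Hm as [m Hm]. exists m. intros f g Hfg H.
  rewrite Forall_forall in *. intros k Hk. rewrite <- Hfg by auto. auto.
Qed.

Definition emp_deviates {Om T : Type} (dec : nat -> T) (fmu : T -> R) (X : nat -> Om -> T)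
  (A : nat -> T -> bool) (m n : nat) (delta : R) (w : Om) : Prop :=
  exists j, (j <= m)%nat /\ delta <= Rabs (emp X n w (A j) - meas dec fmu (A j)).

Definition indicators {Om T : Type} (A : T -> bool) (X : nat -> Om -> T) (n : nat) (w : Om)
  : list bool := map (fun i => A (X i w)) (seq 0 n).

Lemma length_indicators {Om T : Type} (A : T -> bool) (X : nat -> Om -> T) n w :
  length (indicators A X n w) = n.
Proof. unfold indicators. rewrite length_map, length_seq; auto. Qed.

Lemma emp_ntrue {Om T : Type} (A : T -> bool) (X : nat -> Om -> T) n w :
  (1 <= n)%nat -> emp X n w A = ntrue (indicators A X n w) / INR n.
Proof.
  intro Hn. unfold emp, indicators. destruct n as [|m]; [lia|]. simpl pred.
  unfold Rdiv; rewrite Rmult_comm; f_equal. clear Hn. induction m.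
  - unfold ntrue; simpl. ring.
  - rewrite seq_S, map_app, ntrue_app, <- IHm. unfold ntrue; simpl. ring.
Qed.

Lemma map_seq_eq_iff (b : list bool) : forall s (g : nat -> bool),
  map g (seq s (length b)) = b <->
  Forall (fun k => Bool.eqb (g k) (nth (k - s) b false) = true) (seq s (length b)).
Proof.
  induction b as [|x b IH]; intros s g; simpl; [split; auto|].
  rewrite Forall_cons_iff, Nat.sub_diag.
  assert (Ht : Forall (fun k => Bool.eqb (g k) (nth (k - s) (x :: b) false) = true) (seq (S s) (length b))
           <-> Forall (fun k => Bool.eqb (g k) (nth (k - S s) b false) = true) (seq (S s) (length b))).
  { rewrite !Forall_forall. split; intros H k Hk; specialize (H k Hk); apply in_seq in Hk;
      replace (k - s)%nat with (S (k - S s)) in * by lia; auto. }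
  rewrite Ht, <- IH. simpl. split.
  - intro H; injection H; intros -> ->; split; auto. apply Bool.eqb_reflx.
  - intros [H1 ->]. apply Bool.eqb_prop in H1. rewrite H1; auto.
Qed.

Lemma fold_prod_ext (f g : nat -> R) l : (forall k, In k l -> f k = g k) ->
  fold_right (fun k acc => f k * acc) 1 l = fold_right (fun k acc => g k * acc) 1 l.
Proof.
  induction l; intro H; simpl; auto. rewrite H, IHl; auto; [intros; apply H|]; simpl; auto.
Qed.

Lemma Forall_cons_update {U : Type} (f g : nat -> U) k y (l : list nat) : ~ In k l ->
  Forall (fun i => f i = (if Nat.eqb i k then y else g i)) (k :: l)
  <-> f k = y /\ Forall (fun i => f i = g i) l.
Proof.
  intro Hk. rewrite Forall_cons_iff, Nat.eqb_refl, !Forall_forall.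
  assert (Hl : forall i, In i l -> Nat.eqb i k = false)
    by (intros i Hi; destruct (Nat.eqb_spec i k); subst; tauto).
  split; intros [H1 H2]; split; auto; intros i Hi; specialize (H2 i Hi); rewrite Hl in *; auto.
Qed.

Lemma prod_meas_eqb_nth {T : Type} (dec : nat -> T) (f : T -> R) (A : T -> bool) (b : list bool) :
  is_prob_mass dec f -> forall s,
  fold_right (fun k acc => meas dec f (fun y => Bool.eqb (A y) (nth (k - s) b false)) * acc) 1
    (seq s (length b))
  = bern_weight (meas dec f A) b.
Proof.
  intro Hf. induction b as [|x b IH]; intro s; simpl; auto.
  rewrite Nat.sub_diag, <- (IH (S s)). f_equal.
  - destruct x.
    + f_equal. apply functional_extensionality; intro y; destruct (A y); auto.
    + rewrite <- meas_negb by auto. f_equal.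
  - apply fold_prod_ext. intros k Hk. apply in_seq in Hk.
    replace (k - s)%nat with (S (k - S s)) by lia. auto.
Qed.

Section IIDSequence.
Context {Om : Type} {F : (Om -> Prop) -> Prop} {P : (Om -> Prop) -> R}.
Hypothesis HP : probability F P.
Context {T : Type} (enc : T -> nat) (dec : nat -> T).
Hypothesis Henc : forall x, dec (enc x) = x.
Hypothesis Hdec : forall k, enc (dec k) = k.
Context (fmu : T -> R) (X : nat -> Om -> T).
Hypothesis Hmu : is_prob_mass dec fmu.
Hypothesis HX : iid_seq F P fmu X.

(* Induction on [m]: split the event according to the value [dec j] of [X m]. *)
Lemma F_depends_on_first m Q : depends_on_first m Q -> F (fun w => Q (fun i => X i w)).
Proof.
  revert Q; induction m as [|m IH]; intros Q HQ.
  - apply (F_ext _ _ _ (F_const HP (Q (fun _ => dec 0%nat)))).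
    intro w; split; apply HQ; intros; lia.
  - set (Q' := fun j (f : nat -> T) => Q (fun i => if Nat.eqb i m then dec j else f i)).
    assert (HQ' : forall j, depends_on_first m (Q' j)).
    { intros j f g Hfg. unfold Q'. apply HQ. intros i Hi.
      destruct (Nat.eqb_spec i m); auto. apply Hfg; lia. }
    apply (F_ext _ _ _ (F_exists HP (fun j w => X m w = dec j /\ Q' j (fun i => X i w))
                         (fun j => F_and HP _ _ (proj1 HX m _) (IH _ (HQ' j))))).
    intro w; split.
    + intros [j [Hj HQj]]. revert HQj. apply HQ. intros i Hi.
      destruct (Nat.eqb_spec i m); subst; auto.
    + intro H. exists (enc (X m w)). rewrite Henc. split; auto.
      revert H. apply HQ. intros i Hi. destruct (Nat.eqb_spec i m); subst; auto.
Qed.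

Lemma F_Forall (l : list nat) (G : nat -> T -> Prop) : F (fun w => Forall (fun k => G k (X k w)) l).
Proof.
  destruct (depends_on_first_Forall l G) as [m Hm].
  exact (F_depends_on_first m _ Hm).
Qed.

Lemma F_indicators (A : T -> bool) n (Q : list bool -> Prop) : F (fun w => Q (indicators A X n w)).
Proof.
  apply (F_depends_on_first n (fun f => Q (map (fun i => A (f i)) (seq 0 n)))).
  intros f g Hfg. rewrite (map_ext_in (fun i => A (f i)) (fun i => A (g i))); auto.
  intros i Hi. apply in_seq in Hi. rewrite Hfg; auto; lia.
Qed.

Lemma P_split_on_value (G : Om -> Prop) k :
  F G -> infinite_sum (fun j => P (fun w => X k w = dec j /\ G w)) (P G).
Proof.
  intro HG.
  assert (Hd : forall n m w, n <> m -> X k w = dec n /\ G w -> X k w = dec m /\ G w -> False).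
  { intros n m w Hnm [H1 _] [H2 _]. apply Hnm. rewrite <- (Hdec n), <- (Hdec m), <- H1, <- H2; auto. }
  pose proof (pr_additive _ _ HP _ (fun j => F_and HP _ _ (proj1 HX k (dec j)) HG) Hd) as H.
  rewrite (P_ext P _ G) in H; auto.
  intro w; split; [intros [j [_ HGw]]; auto|intro HGw; exists (enc (X k w)); rewrite Henc; auto].
Qed.

(* Induction on [ls]: split the event according to the value [dec j] of [X k] for the head
   index [k]; each slice is a point event at [k], handled by the induction hypothesis. *)
Lemma P_sets_and_points (ls lp : list nat) (xs : nat -> T) (A : nat -> T -> bool) :
  NoDup (ls ++ lp) ->
  P (fun w => Forall (fun k => A k (X k w) = true) ls /\ Forall (fun k => X k w = xs k) lp)
  = fold_right (fun k acc => meas dec fmu (A k) * acc) 1 ls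
    * fold_right (fun k acc => fmu (xs k) * acc) 1 lp.
Proof.
  revert lp xs. induction ls as [|k ls IH]; intros lp xs Hnd.
  - simpl. rewrite Rmult_1_l, <- (proj2 HX lp xs Hnd). apply P_ext. intro; split; [tauto|auto].
  - set (C := fold_right (fun k acc => meas dec fmu (A k) * acc) 1 ls
              * fold_right (fun k acc => fmu (xs k) * acc) 1 lp).
    assert (Hnd' : NoDup (ls ++ k :: lp))
      by (eapply Permutation_NoDup; [apply Permutation_middle|exact Hnd]).
    assert (Hk : ~ In k lp) by (intro; apply NoDup_remove_2 in Hnd'; apply Hnd', in_or_app; auto).
    assert (Hslice : forall j, P (fun w => X k w = dec j /\
                (Forall (fun k => A k (X k w) = true) (k :: ls) /\ Forall (fun k => X k w = xs k) lp))
              = (if A k (dec j) then fmu (dec j) else 0) * C).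
    { intro j. set (xs' := fun i => if Nat.eqb i k then dec j else xs i).
      destruct (A k (dec j)) eqn:Ej.
      - rewrite (P_ext P _ (fun w => Forall (fun k => A k (X k w) = true) ls
                                   /\ Forall (fun k => X k w = xs' k) (k :: lp))).
        + rewrite (IH (k :: lp) xs' Hnd'). unfold C. simpl. unfold xs' at 1. rewrite Nat.eqb_refl.
          rewrite (fold_prod_ext (fun i => fmu (xs' i)) (fun i => fmu (xs i))); [ring|].
          intros i Hi; unfold xs'; destruct (Nat.eqb_spec i k); subst; tauto.
        + intro w. pose proof (Forall_cons_update (fun i => X i w) xs k (dec j) lp Hk) as Hu.
          cbv beta in Hu. unfold xs'. rewrite Hu.
          rewrite Forall_cons_iff. split; [intros [-> [[_ H1] H2]]|intros [H1 [-> H2]]]; tauto.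
      - rewrite (P_ext P _ (fun _ => False)) by (intro w; rewrite Forall_cons_iff; split;
          [intros [-> [[H _] _]]; congruence|tauto]).
        rewrite (P_false HP). ring. }
    eapply uniqueness_sum; [apply P_split_on_value|].
    + apply (F_and HP); [apply (F_Forall (k :: ls) (fun k y => A k y = true))|].
      apply (F_Forall lp (fun k y => y = xs k)).
    + eapply infinite_sum_ext; [intro j; symmetry; apply Hslice|].
      replace (fold_right (fun k acc => meas dec fmu (A k) * acc) 1 (k :: ls)
               * fold_right (fun k acc => fmu (xs k) * acc) 1 lp)
        with (meas dec fmu (A k) * C) by (unfold C; simpl; ring).
      apply infinite_sum_scal_r, meas_spec; auto.
Qed.

Lemma P_indicators_eq (A : T -> bool) (b : list bool) :
  P (fun w => indicators A X (length b) w = b) = bern_weight (meas dec fmu A) b.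
Proof.
  pose proof (P_sets_and_points (seq 0 (length b)) nil (fun _ => dec 0%nat)
     (fun k y => Bool.eqb (A y) (nth (k - 0) b false))) as H.
  rewrite app_nil_r in H. specialize (H (seq_NoDup _ _)). simpl in H.
  rewrite Rmult_1_r, (prod_meas_eqb_nth dec fmu A b Hmu 0) in H. rewrite <- H.
  apply P_ext. intro w. unfold indicators. rewrite (map_seq_eq_iff b 0 (fun i => A (X i w))).
  split; [intro; split; auto|tauto].
Qed.

Lemma P_indicators_in (A : T -> bool) n (L : list (list bool)) :
  NoDup L -> (forall b, In b L -> length b = n) ->
  P (fun w => In (indicators A X n w) L) = sum_over (bern_weight (meas dec fmu A)) L.
Proof.
  induction L as [|b L IH]; intros Hnd Hl.
  - rewrite (P_ext P _ (fun _ => False)) by (intro; simpl; tauto). apply (P_false HP).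
  - inversion Hnd; subst.
    rewrite (P_ext P _ (fun w => indicators A X n w = b \/ In (indicators A X n w) L))
      by (intro; simpl; split; intros [H|H]; auto).
    rewrite (P_or_disjoint HP).
    + rewrite IH; auto; [|intros; apply Hl; simpl; auto]. unfold sum_over; simpl. f_equal.
      rewrite <- (Hl b) by (left; auto). apply P_indicators_eq.
    + apply (F_indicators A n (fun c => c = b)).
    + apply (F_indicators A n (fun c => In c L)).
    + intros w -> Hw. contradiction.
Qed.

Lemma P_indicators_le (A : T -> bool) n (Q : list bool -> Prop) (g : list bool -> R) :
  (forall b, 0 <= g b) -> (forall b, Q b -> 1 <= g b) ->
  P (fun w => Q (indicators A X n w))
  <= sum_over (fun b => bern_weight (meas dec fmu A) b * g b) (bool_seqs n).
Proof.
  intros Hg HQ.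
  set (q := fun b => if excluded_middle_informative (Q b) then true else false).
  assert (Hq : forall b, q b = true <-> Q b)
    by (intro b; unfold q; destruct (excluded_middle_informative (Q b)); split; auto; discriminate).
  rewrite (P_ext P _ (fun w => In (indicators A X n w) (filter q (bool_seqs n)))).
  - rewrite P_indicators_in.
    + apply sum_over_filter_le; auto; [|intros b Hb; apply HQ, Hq; auto].
      intro; apply bern_weight_ge0. split; [apply meas_ge0|apply meas_le1]; auto.
    + apply NoDup_filter, NoDup_bool_seqs.
    + intros b Hb. apply filter_In in Hb. apply in_bool_seqs; tauto.
  - intro w. rewrite filter_In, in_bool_seqs, length_indicators, Hq. tauto.
Qed.

Lemma chernoff_ntrue (A : T -> bool) n delta : 0 < delta <= 1 ->
  P (fun w => INR n * delta <= Rabs (ntrue (indicators A X n w) - INR n * meas dec fmu A))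
  <= 2 * exp (- (INR n * delta ^ 2 / 8)).
Proof.
  intro Hd. set (p := meas dec fmu A).
  assert (Hp : 0 <= p <= 1) by (split; [apply meas_ge0|apply meas_le1]; auto).
  eapply Rle_trans; [|apply (chernoff_weight_mean p delta n Hp Hd)].
  apply (P_indicators_le A n (fun b => INR n * delta <= Rabs (ntrue b - INR n * p)));
    [apply chernoff_weight_ge0|].
  intros b Hb; apply chernoff_weight_ge1; auto; lra.
Qed.

Lemma chernoff_emp (A : T -> bool) n delta : (1 <= n)%nat -> 0 < delta <= 1 ->
  P (fun w => delta <= Rabs (emp X n w A - meas dec fmu A)) <= 2 * exp (- (INR n * delta ^ 2 / 8)).
Proof.
  intros Hn Hd. eapply Rle_trans; [|apply (chernoff_ntrue A n delta Hd)]. right. apply P_ext. intro w.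
  assert (HnR : 0 < INR n) by (apply lt_0_INR; lia).
  rewrite emp_ntrue by auto.
  replace (ntrue (indicators A X n w) - INR n * meas dec fmu A)
    with (INR n * (ntrue (indicators A X n w) / INR n - meas dec fmu A)) by (field; lra).
  rewrite Rabs_mult, (Rabs_right (INR n)) by lra.
  split; intro H; [apply Rmult_le_compat_l|apply (Rmult_le_reg_l (INR n))]; lra.
Qed.

Lemma F_emp (A : T -> bool) n (Q : R -> Prop) : F (fun w => Q (emp X n w A)).
Proof.
  apply (F_depends_on_first (S n)
           (fun f => Q (/ INR n * sum_f_R0 (fun i => if A (f i) then 1 else 0) (pred n)))).
  intros f g Hfg. rewrite (sum_eq _ (fun i => if A (g i) then 1 else 0)); auto.
  intros i Hi. rewrite Hfg; auto; lia.
Qed.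

Lemma F_emp_deviates (A : nat -> T -> bool) m n delta : F (emp_deviates dec fmu X A m n delta).
Proof.
  apply (F_exists HP); intro j. apply (F_and HP); [apply (F_const HP)|].
  apply (F_emp (A j) n (fun e => delta <= Rabs (e - meas dec fmu (A j)))).
Qed.

Lemma P_emp_deviates_le (A : nat -> T -> bool) m n delta : (1 <= n)%nat -> 0 < delta <= 1 ->
  P (emp_deviates dec fmu X A m n delta) <= INR (S m) * (2 * exp (- (INR n * delta ^ 2 / 8))).
Proof.
  intros Hn Hd. rewrite Rmult_comm, <- sum_cte.
  eapply Rle_trans; [apply (P_exists_le_sum HP); intro j;
    apply (F_emp (A j) n (fun e => delta <= Rabs (e - meas dec fmu (A j))))|].
  apply sum_Rle; intros j _. apply chernoff_emp; auto.
Qed.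

(* The union bound over the [K n <= n] cells costs a factor [n], which the Chernoff exponent
   [n (s n / (k+1))^2 / 8 >= c n^(1 - 2 tau)] absorbs. *)
Lemma P_limsup_emp_deviates (A : nat -> nat -> T -> bool) (K : nat -> nat) (s : nat -> R) tau N0 k :
  0 < tau < 1/2 -> (1 <= N0)%nat ->
  (forall n, (N0 <= n)%nat ->
     0 < s n <= 1 /\ INR (K n) <= INR n /\ 1 < Rpower (INR n) tau * s n) ->
  P (limsup_event (fun n => emp_deviates dec fmu X (A n) (pred (K n)) n (s n / INR (S k)))) = 0.
Proof.
  intros Htau HN0 Hs. assert (Hk : 0 < INR (S k)) by (apply lt_0_INR; lia).
  set (c := / (8 * INR (S k) ^ 2)).
  assert (Hc : 0 < c) by (apply Rinv_0_lt_compat, Rmult_lt_0_compat; [lra|apply pow_lt; lra]).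
  destruct (stretched_exp_decay (1 - 2 * tau) c ltac:(lra) Hc) as [C [_ HC]].
  apply (borel_cantelli HP _ C N0); [intro n; apply F_emp_deviates|auto|]. intros n Hn.
  destruct (Hs n Hn) as [Hsn [HKn Hrs]].
  assert (Hn1 : (1 <= n)%nat) by lia.
  set (d := s n / INR (S k)).
  assert (Hd : 0 < d <= 1).
  { split; [apply Rdiv_lt_0_compat; lra|]. apply (Rmult_le_reg_r (INR (S k))); auto.
    unfold d, Rdiv; rewrite Rmult_assoc, Rinv_l, Rmult_1_r by lra. rewrite S_INR.
    pose proof (pos_INR k); lra. }
  eapply Rle_trans; [apply (P_emp_deviates_le (A n) _ n d Hn1 Hd)|].
  eapply Rle_trans; [|apply (HC n Hn1)].
  assert (HSK : INR (S (pred (K n))) <= INR n).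
  { destruct (K n) eqn:EK; simpl pred; [apply (INR_ge1 _ Hn1)|exact HKn]. }
  assert (Hexp : exp (- (INR n * d ^ 2 / 8)) <= exp (- (c * Rpower (INR n) (1 - 2 * tau)))).
  { apply exp_le, Ropp_le_contravar. unfold c, d. rewrite Rmult_comm.
    apply deviation_exponent_ge; auto; lra. }
  pose proof (exp_pos (- (INR n * d ^ 2 / 8))). pose proof (pos_INR (S (pred (K n)))).
  pose proof (pos_INR n). nra.
Qed.

Lemma almost_sure_uniform_emp (A : nat -> nat -> T -> bool) (K : nat -> nat) (s : nat -> R) tau N0 :
  0 < tau < 1/2 -> (1 <= N0)%nat ->
  (forall n, (N0 <= n)%nat ->
     0 < s n <= 1 /\ INR (K n) <= INR n /\ 1 < Rpower (INR n) tau * s n) ->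
  exists E, F E /\ P E = 1 /\
    forall w, E w -> forall k, exists N, forall n, (N <= n)%nat -> forall j, (j < K n)%nat ->
      Rabs (emp X n w (A n j) - meas dec fmu (A n j)) < s n / INR (S k).
Proof.
  intros Htau HN0 Hs.
  destruct (almost_surely_eventually_not HP
              (fun k n => emp_deviates dec fmu X (A n) (pred (K n)) n (s n / INR (S k))))
    as [E [HE [HPE HEw]]].
  - intros k n; apply F_emp_deviates.
  - intro k; apply (P_limsup_emp_deviates A K s tau N0 k); auto.
  - exists E. repeat split; auto. intros w Hw k. destruct (HEw w Hw k) as [N HN].
    exists N. intros n Hn j Hj. apply Rnot_le_lt. intro Hdev. apply (HN n Hn). exists j. split; auto; lia.
Qed.
End IIDSequence.

Theorem mainTheorem5
  (T : Type) (enc : T -> nat) (dec : nat -> T)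
  (Henc : forall x, dec (enc x) = x) (Hdec : forall k, enc (dec k) = k)
  (fv fmu : T -> R)
  (Hv : is_prob_mass dec fv) (Hmu : is_prob_mass dec fmu)
  (Hvinf : forall l : list T, exists x, 0 < fv x /\ ~ In x l)
  (Hac : forall x, fv x = 0 -> fmu x = 0)
  (a h : nat -> R)
  (Ha : forall n, 0 < a n < 1) (Hh : forall n, 0 < h n < 1)
  (Ha0 : Un_cv a 0) (Hh0 : Un_cv h 0)
  (tau : R) (Htau : 0 < tau < 1/2)
  (Hrate : Un_cv (fun n => / (a n * h n) / Rpower (INR n) tau) 0)
  (K : nat -> nat) (lab : nat -> T -> nat)
  (Hpart : forall n, max_partition dec fv (h n) (K n) (lab n))
  (Om : Type) (F : (Om -> Prop) -> Prop) (P : (Om -> Prop) -> R)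
  (HP : probability F P)
  (X : nat -> Om -> T) (HX : iid_seq F P fmu X) :
  exists E : Om -> Prop, F E /\ P E = 1 /\
    forall w, E w ->
      forall eps, 0 < eps -> exists N : nat, forall n, (N <= n)%nat ->
        forall x, 0 < fv x ->
          Rabs (oracle fv fmu dec a lab n x / barron fv dec a lab X n w x - 1) <= eps.
Proof.
  destruct (Hrate 1 ltac:(lra)) as [N1 HN1].
  destruct (almost_sure_uniform_emp HP enc dec Henc Hdec fmu X Hmu HX
              (fun n j y => Nat.eqb (lab n y) j) K (fun n => a n * h n) tau (max N1 1))
    as [E [HE [HPE HEw]]]; [lra|lia|..].
  { intros n Hn. pose proof (Ha n); pose proof (Hh n).
    split; [split; nra|]. apply rate_bounds; try lra; [lia| |apply HN1; lia].
    apply (good_partition_size dec fv _ _ (lab n) Hv), Hpart. }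
  exists E. split; [|split]; auto. intros w Hw eps Heps.
  destruct (INR_unbounded (/ eps)) as [k Hk].
  destruct (HEw w Hw k) as [N HN].
  exists (max N 1). intros n Hn x Hx.
  destruct (Hpart n) as [[Hlab Hcell] _].
  apply Rle_trans with (/ INR (S k)).
  - unfold oracle, barron. apply (barron_ratio_le _ _ _ (h n)); auto; try apply Hh.
    + apply Hcell, Hlab.
    + rewrite emp_ntrue by lia. apply Rmult_le_pos; [apply ntrue_ge0|].
      left; apply Rinv_0_lt_compat, lt_0_INR; lia.
    + apply Rinv_0_lt_compat, lt_0_INR; lia.
    + rewrite <- Rabs_Ropp, Ropp_minus_distr. left. apply (HN n ltac:(lia) (lab n x) (Hlab x)).
  - rewrite <- (Rinv_inv eps). apply Rinv_le_contravar; [apply Rinv_0_lt_compat; auto|].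
    rewrite S_INR; lra.
Qed.
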